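(* In the compulsory constrained two-facility location setting described in the context, for every location profile $\mathbf{x}\in\mathbb{R}^n$, the peak of $\mathrm{cen}(\mathbf{x})$ in $AP$ is an optimal solution for the maximum cost objective, i.e. it minimizes $\max_{j}\max\{|y_1-x_j|,|y_2-x_j|\}$ over all feasible $(y_1,y_2)$.
   Context: $n$ agents have locations $x_1,\dots,x_n\in\mathbb{R}$; $\mathrm{cen}(\mathbf{x})=(\min_j x_j+\max_j x_j)/2$. $A=\{a_1\le\dots\le a_m\}$, $m\ge2$, is a multiset of alternative locations; a feasible outcome places $F_1$ at $y_1\in A$ and $F_2$ at $y_2\in A\setminus\{y_1\}$ (one copy removed). $AP=\{(a_1,a_2),\dots,(a_{m-1},a_m)\}$. Zones: $Z_1=(-\infty,\frac{a_1+a_3}{2}]$, $Z_k=(\frac{a_{k-1}+a_{k+1}}{2},\frac{a_k+a_{k+2}}{2}]$ for $2\le k\le m-2$, $Z_{m-1}=(\frac{a_{m-2}+a_m}{2},\infty)$ ($Z_1=\mathbb{R}$ if $m=2$); the peak in $AP$ of a point $z\in Z_k$ is $(a_k,a_{k+1})$. *)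

From Stdlib Require Import Reals Lra Lia.
Open Scope R_scope.

(* Agents are indexed 0..n-1 (x : nat -> R, only x 0 .. x (n-1) matter).
   Alternatives are indexed 0..m-1 (a : nat -> R), sorted nondecreasingly. *)

Fixpoint min_upto (f : nat -> R) (k : nat) : R :=
  match k with
  | O => f O
  | S k' => Rmin (min_upto f k') (f k)
  end.

Fixpoint max_upto (f : nat -> R) (k : nat) : R :=
  match k with
  | O => f O
  | S k' => Rmax (max_upto f k') (f k)
  end.

Definition cen (n : nat) (x : nat -> R) : R :=
  (min_upto x (n - 1) + max_upto x (n - 1)) / 2.

Definition max_cost (n : nat) (x : nat -> R) (y1 y2 : R) : R :=
  max_upto (fun j => Rmax (Rabs (y1 - x j)) (Rabs (y2 - x j))) (n - 1).

Definition sorted_alts (m : nat) (a : nat -> R) : Prop :=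
  forall i j, (i <= j)%nat -> (j < m)%nat -> a i <= a j.

(* Zones, 0-based: zone k (0 <= k <= m-2) has peak (a_k, a_(k+1)).
   Z_0 = (-oo, (a_0+a_2)/2], Z_k = ((a_(k-1)+a_(k+1))/2, (a_k+a_(k+2))/2],
   Z_(m-2) = ((a_(m-3)+a_(m-1))/2, +oo); Z_0 = R when m = 2. *)
Definition in_zone (m : nat) (a : nat -> R) (k : nat) (z : R) : Prop :=
  (k <= m - 2)%nat /\
  (k = O \/ (a (k - 1)%nat + a (S k)) / 2 < z) /\
  (k = (m - 2)%nat \/ z <= (a k + a (S (S k))) / 2).

(* Write L, U for the leftmost and rightmost agents and c = cen(x) = (L + U)/2.
   The agent farthest from a point y is L or U, at distance |y - c| + (U - L)/2,
   so the maximum cost of (y1, y2) is max(|y1 - c|, |y2 - c|) + (U - L)/2 and only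
   the distances of the two facilities to c matter.  For c in zone k, every
   alternative other than a_k, a_(k+1) is at least as far from c as both of them:
   to the right of the peak because c <= (a_k + a_(k+2))/2, to the left because
   c > (a_(k-1) + a_(k+1))/2. *)

From Stdlib Require Import Reals Lra Lia.
Open Scope R_scope.

Lemma Rmax_plus_r a b h : Rmax (a + h) (b + h) = Rmax a b + h.
Proof. unfold Rmax; destruct (Rle_dec a b), (Rle_dec (a + h) (b + h)); lra. Qed.

Lemma Rmax_Rabs_sub_endpoints L U y : L <= U ->
  Rmax (Rabs (y - L)) (Rabs (y - U)) = Rabs (y - (L + U) / 2) + (U - L) / 2.
Proof.
  intros HLU; unfold Rmax.
  destruct (Rle_dec (Rabs (y - L)) (Rabs (y - U))); split_Rabs; lra.
Qed.

Lemma Rabs_sub_le_Rmax_endpoints L U t y : L <= t <= U ->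
  Rabs (y - t) <= Rmax (Rabs (y - L)) (Rabs (y - U)).
Proof. intros Ht; rewrite Rmax_comm; apply RmaxAbs; lra. Qed.

Lemma Rabs_sub_le_right c y z : 2 * c - z <= y <= z -> Rabs (y - c) <= Rabs (z - c).
Proof. intros; split_Rabs; lra. Qed.

Lemma Rabs_sub_le_left c y z : z <= y <= 2 * c - z -> Rabs (y - c) <= Rabs (z - c).
Proof. intros; split_Rabs; lra. Qed.

Section Extrema.

Variable f : nat -> R.

Lemma max_upto_ge k j : (j <= k)%nat -> f j <= max_upto f k.
Proof.
  induction k as [|k IHk]; intros Hj; simpl.
  - replace j with O by lia; lra.
  - destruct (Nat.eq_dec j (S k)) as [->|Hneq]; [apply Rmax_r|].
    eapply Rle_trans; [apply IHk; lia | apply Rmax_l].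
Qed.

Lemma min_upto_le k j : (j <= k)%nat -> min_upto f k <= f j.
Proof.
  induction k as [|k IHk]; intros Hj; simpl.
  - replace j with O by lia; lra.
  - destruct (Nat.eq_dec j (S k)) as [->|Hneq]; [apply Rmin_r|].
    eapply Rle_trans; [apply Rmin_l | apply IHk; lia].
Qed.

Lemma max_upto_lub k B : (forall j, (j <= k)%nat -> f j <= B) -> max_upto f k <= B.
Proof.
  induction k as [|k IHk]; intros HB; simpl.
  - apply HB; lia.
  - apply Rmax_lub; [apply IHk; intros; apply HB|apply HB]; lia.
Qed.

Lemma max_upto_attained k : exists j, (j <= k)%nat /\ max_upto f k = f j.
Proof.
  induction k as [|k [j [Hj Hmax]]]; simpl; [now exists O|].
  unfold Rmax; destruct (Rle_dec (max_upto f k) (f (S k))).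
  - now exists (S k).
  - exists j; split; [lia | exact Hmax].
Qed.

Lemma min_upto_attained k : exists j, (j <= k)%nat /\ min_upto f k = f j.
Proof.
  induction k as [|k [j [Hj Hmin]]]; simpl; [now exists O|].
  unfold Rmin; destruct (Rle_dec (min_upto f k) (f (S k))).
  - exists j; split; [lia | exact Hmin].
  - now exists (S k).
Qed.

Lemma min_upto_le_max_upto k : min_upto f k <= max_upto f k.
Proof.
  apply Rle_trans with (f O); [apply min_upto_le | apply max_upto_ge]; lia.
Qed.

End Extrema.

Lemma max_upto_Rabs_sub f k y :
  max_upto (fun j => Rabs (y - f j)) k
  = Rmax (Rabs (y - min_upto f k)) (Rabs (y - max_upto f k)).
Proof.
  apply Rle_antisym.
  - apply max_upto_lub; intros j Hj.
    apply Rabs_sub_le_Rmax_endpoints; split;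
      [apply min_upto_le | apply max_upto_ge]; exact Hj.
  - destruct (min_upto_attained f k) as [jl [Hjl ->]].
    destruct (max_upto_attained f k) as [ju [Hju ->]].
    apply Rmax_lub; apply (max_upto_ge (fun j => Rabs (y - f j))); assumption.
Qed.

Lemma max_upto_Rmax f g k :
  max_upto (fun j => Rmax (f j) (g j)) k = Rmax (max_upto f k) (max_upto g k).
Proof.
  apply Rle_antisym.
  - apply max_upto_lub; intros j Hj; apply Rmax_lub.
    + apply Rle_trans with (max_upto f k); [exact (max_upto_ge f k j Hj) | apply Rmax_l].
    + apply Rle_trans with (max_upto g k); [exact (max_upto_ge g k j Hj) | apply Rmax_r].
  - pose (h j := Rmax (f j) (g j)).
    apply Rmax_lub; apply max_upto_lub; intros j Hj.
    + apply Rle_trans with (h j); [apply Rmax_l | exact (max_upto_ge h k j Hj)].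
    + apply Rle_trans with (h j); [apply Rmax_r | exact (max_upto_ge h k j Hj)].
Qed.

Lemma max_cost_eq n x y1 y2 :
  max_cost n x y1 y2
  = Rmax (Rabs (y1 - cen n x)) (Rabs (y2 - cen n x))
    + (max_upto x (n - 1) - min_upto x (n - 1)) / 2.
Proof.
  unfold max_cost, cen.
  rewrite max_upto_Rmax, !max_upto_Rabs_sub,
    !Rmax_Rabs_sub_endpoints by apply min_upto_le_max_upto.
  apply Rmax_plus_r.
Qed.

Section Peak.

Variables (m k : nat) (a : nat -> R) (c : R).
Hypothesis a_sorted : sorted_alts m a.
Hypothesis c_in_zone : in_zone m a k c.

Lemma peak_dist_le_right t : (t < m)%nat -> (k + 2 <= t)%nat ->
  Rmax (Rabs (a k - c)) (Rabs (a (S k) - c)) <= Rabs (a t - c).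
Proof.
  intros Ht Hkt; destruct c_in_zone as [Hk [_ [Hlast|Hmid]]]; [lia|].
  assert (a k <= a (S k)) by (apply a_sorted; lia).
  assert (a (S k) <= a (S (S k))) by (apply a_sorted; lia).
  assert (a (S (S k)) <= a t) by (apply a_sorted; lia).
  apply Rmax_lub; apply Rabs_sub_le_right; lra.
Qed.

Lemma peak_dist_le_left t : (t + 1 <= k)%nat ->
  Rmax (Rabs (a k - c)) (Rabs (a (S k) - c)) <= Rabs (a t - c).
Proof.
  intros Htk; destruct c_in_zone as [Hk [[Hfirst|Hmid] _]]; [lia|].
  assert (a t <= a (k - 1)%nat) by (apply a_sorted; lia).
  assert (a (k - 1)%nat <= a k) by (apply a_sorted; lia).
  assert (a k <= a (S k)) by (apply a_sorted; lia).
  apply Rmax_lub; apply Rabs_sub_le_left; lra.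
Qed.

Lemma peak_dist_le_other t : (t < m)%nat -> t <> k -> t <> S k ->
  Rmax (Rabs (a k - c)) (Rabs (a (S k) - c)) <= Rabs (a t - c).
Proof.
  intros Ht Htk HtSk; destruct (Nat.le_gt_cases (k + 2) t).
  - apply peak_dist_le_right; lia.
  - apply peak_dist_le_left; lia.
Qed.

Lemma peak_dist_le i j : (i < m)%nat -> (j < m)%nat -> i <> j ->
  Rmax (Rabs (a k - c)) (Rabs (a (S k) - c)) <= Rmax (Rabs (a i - c)) (Rabs (a j - c)).
Proof.
  intros Hi Hj Hij.
  assert (Hcases : (i = k /\ j = S k) \/ (i = S k /\ j = k)
                   \/ (i <> k /\ i <> S k) \/ (j <> k /\ j <> S k)) by lia.
  destruct Hcases as [[-> ->]|[[-> ->]|[[Hik HiSk]|[Hjk HjSk]]]].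
  - apply Rle_refl.
  - rewrite Rmax_comm; apply Rle_refl.
  - apply Rle_trans with (Rabs (a i - c)); [now apply peak_dist_le_other | apply Rmax_l].
  - apply Rle_trans with (Rabs (a j - c)); [now apply peak_dist_le_other | apply Rmax_r].
Qed.

End Peak.

Theorem lemma3 (n m : nat) (x a : nat -> R) (k : nat) :
  (0 < n)%nat -> (2 <= m)%nat -> sorted_alts m a ->
  in_zone m a k (cen n x) ->
  forall i j : nat, (i < m)%nat -> (j < m)%nat -> i <> j ->
  max_cost n x (a k) (a (S k)) <= max_cost n x (a i) (a j).
Proof.
  intros _ _ Hsorted Hzone i j Hi Hj Hij.
  rewrite !max_cost_eq.
  apply Rplus_le_compat_r.
  now apply (peak_dist_le m k a).
Qed.
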